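(* Let $f\in\mathcal{A}$ satisfy $\operatorname{Re}\big((1-z^2)f'(z)\big)>0$ for all $z\in\mathbb{D}$ (i.e. $f\in\mathcal{F}_2$), and let $\gamma_1,\gamma_2,\gamma_3$ be its logarithmic coefficients. Then $$|H_{2,1}(F_f)|=|\gamma_1\gamma_3-\gamma_2^2|\le \tfrac14 .$$ The inequality is sharp: equality holds for $\tilde f(z)=\int_0^z \frac{1+t^2}{(1-t^2)^2}\,dt$, which satisfies $(1-z^2)\tilde f'(z)=\frac{1+z^2}{1-z^2}$ and hence lies in $\mathcal{F}_2$.
   Context: $\mathbb{D}=\{z\in\mathbb{C}:|z|<1\}$. $\mathcal{A}$ denotes the class of analytic functions $f$ on $\mathbb{D}$ of the form $f(z)=z+\sum_{n=2}^\infty a_n z^n$. $\mathcal{F}_2=\{f\in\mathcal{A}:\operatorname{Re}(1-z^2)f'(z)>0,\ z\in\mathbb{D}\}$. For such $f$ the logarithmic coefficients $\gamma_n$ are defined by $\log\frac{f(z)}{z}=2\sum_{n=1}^\infty\gamma_n z^n$ (with $\log1=0$); explicitly $\gamma_1=\tfrac12 a_2$, $\gamma_2=\tfrac12(a_3-\tfrac12 a_2^2)$, $\gamma_3=\tfrac14(a_4-a_2a_3+\tfrac13 a_2^3)$. $H_{2,1}(F_f)=\gamma_1\gamma_3-\gamma_2^2=\tfrac14\big(a_2a_4-a_3^2+\tfrac1{12}a_2^4\big)$. *)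

From Stdlib Require Import Reals.
From Coquelicot Require Import Coquelicot.
Open Scope C_scope.

Definition in_disk (z : C) : Prop := (Cmod z < 1)%R.

Definition class_A (f : C -> C) (a : nat -> C) : Prop :=
  a 0%nat = 0 /\ a 1%nat = 1 /\
  forall z, in_disk z -> is_series (K := C_AbsRing) (fun n => a n * Cpow z n) (f z).

Definition is_cderiv_on_disk (f f' : C -> C) : Prop :=
  forall z, in_disk z -> is_derive (K := C_AbsRing) f z (f' z).

Definition class_F2 (f f' : C -> C) (a : nat -> C) : Prop :=
  class_A f a /\ is_cderiv_on_disk f f' /\
  forall z, in_disk z -> (0 < Re ((1 - z * z) * f' z))%R.

(* Logarithmic coefficients, via the explicit formulas in terms of a_n
   (log(f(z)/z) = 2 sum gamma_n z^n). *)
Definition gamma1 (a : nat -> C) : C := / 2 * a 2%nat.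
Definition gamma2 (a : nat -> C) : C := / 2 * (a 3%nat - / 2 * (a 2%nat * a 2%nat)).
Definition gamma3 (a : nat -> C) : C :=
  / 4 * (a 4%nat - a 2%nat * a 3%nat + / 3 * Cpow (a 2%nat) 3).

Definition H21 (a : nat -> C) : C := gamma1 a * gamma3 a - gamma2 a * gamma2 a.

(* The extremal function f~(z) = int_0^z (1+t^2)/(1-t^2)^2 dt = z/(1-z^2),
   with coefficients a_n = 1 for odd n, 0 for even n. *)
Definition f_ext (z : C) : C := z / (1 - z * z).
Definition a_ext (n : nat) : C := if Nat.odd n then 1 else 0.

(* Write p(z) = (1 - z^2) f'(z) = sum c_k z^k. Then c_0 = 1, c_1 = 2 a_2,
   c_2 = 3 a_3 - 1, c_3 = 4 a_4 - 2 a_2, Re p > 0 on the disk, and 8 H_{2,1} is a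
   polynomial W(c_1, c_2, c_3). For r < 1, positivity of Re p on |z| = r makes the
   Toeplitz form of (1, c_1 r, c_2 r^2, c_3 r^3) nonnegative. Three test vectors
   for this form give the Carathéodory–Toeplitz parametrisation c_1 = 2u,
   c_2 = 2u^2 + 2(1 - |u|^2) v, c_3 = ... + D with |u| < 1, |v| <= 1 and
   |D| <= 2(1 - |u|^2)(1 - |v|^2); in these variables 36 W is an explicit
   polynomial whose modulus is at most 72 (triangle inequality, then a
   polynomial inequality in |u| and |v|). Letting
   r -> 1 gives |H_{2,1}| <= 1/4. For z/(1 - z^2), a_n = 1 for odd n and 0 for
   even n, and H_{2,1} = -1/4. *)

From Stdlib Require Import Reals Lra Psatz Lia Arith.
From Coquelicot Require Import Coquelicot.
Open Scope C_scope.

Fixpoint csum (f : nat -> C) (n : nat) : C :=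
  match n with O => 0 | S k => csum f k + f k end.

Lemma csum_ext f g n : (forall i, (i < n)%nat -> f i = g i) -> csum f n = csum g n.
Proof.
  induction n as [|n IH]; intros H; simpl; auto.
  rewrite IH by (intros; apply H; lia). rewrite H by lia. reflexivity.
Qed.

Lemma csum_plus f g n : csum (fun i => f i + g i) n = csum f n + csum g n.
Proof. induction n as [|n IH]; simpl; [ring | rewrite IH; ring]. Qed.

Lemma csum_minus f g n : csum (fun i => f i - g i) n = csum f n - csum g n.
Proof. induction n as [|n IH]; simpl; [ring | rewrite IH; ring]. Qed.

Lemma csum_scal c f n : csum (fun i => c * f i) n = c * csum f n.
Proof. induction n as [|n IH]; simpl; [ring | rewrite IH; ring]. Qed.

Lemma csum_zero n : csum (fun _ => 0) n = 0.
Proof. induction n as [|n IH]; simpl; [reflexivity | rewrite IH; ring]. Qed.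

Lemma csum_const c n : csum (fun _ => c) n = INR n * c.
Proof.
  induction n as [|n IH]; simpl csum.
  - simpl. ring.
  - rewrite IH, S_INR, RtoC_plus. ring.
Qed.

Lemma csum_swap (g : nat -> nat -> C) m n :
  csum (fun i => csum (fun j => g i j) n) m = csum (fun j => csum (fun i => g i j) m) n.
Proof.
  induction m as [|m IH]; simpl.
  - rewrite csum_zero. reflexivity.
  - rewrite IH, <- csum_plus. reflexivity.
Qed.

Lemma csum_delta (g : nat -> C) i0 n :
  csum (fun i => if Nat.eqb i i0 then g i else 0) n = if Nat.ltb i0 n then g i0 else 0.
Proof.
  induction n as [|n IH]; simpl.
  - destruct i0; reflexivity.
  - rewrite IH.
    destruct (Nat.eqb_spec n i0) as [->|E].
    + rewrite Nat.ltb_irrefl, (proj2 (Nat.ltb_lt i0 (S i0))) by lia. ring.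
    + destruct (Nat.ltb_spec i0 n), (Nat.ltb_spec i0 (S n)); try lia; ring.
Qed.

Lemma csum_geom w n : (w - 1) * csum (fun m => w ^ m) n = w ^ n - 1.
Proof.
  induction n as [|n IH]; simpl csum.
  - simpl. ring.
  - rewrite Cmult_plus_distr_l, IH, Cpow_S. ring.
Qed.

Lemma csum_conj f n : Cconj (csum f n) = csum (fun i => Cconj (f i)) n.
Proof.
  induction n as [|n IH]; simpl.
  - apply injective_projections; simpl; ring.
  - rewrite Cplus_conj, IH. reflexivity.
Qed.

Lemma Re_csum_ge (f : nat -> C) (B : R) N :
  (forall m, (m < N)%nat -> (- B <= Re (f m))%R) -> (- (INR N * B) <= Re (csum f N))%R.
Proof.
  induction N as [|N IH]; intros H; simpl csum.
  - simpl. lra.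
  - rewrite S_INR. change (Re (csum f N + f N)) with (Re (csum f N) + Re (f N))%R.
    specialize (IH (fun m Hm => H m ltac:(lia))). specialize (H N ltac:(lia)). lra.
Qed.

Definition psum (a : nat -> C) (n : nat) (z : C) : C := csum (fun k => a k * z ^ k) n.

Definition unit_root (N : nat) : C := (cos (2 * PI / INR N), sin (2 * PI / INR N)).

Lemma Cpow_cis th n : (cos th, sin th) ^ n = (cos (INR n * th), sin (INR n * th)).
Proof.
  induction n as [|n IH].
  - simpl. rewrite Rmult_0_l, cos_0, sin_0. reflexivity.
  - rewrite Cpow_S, IH, S_INR.
    replace ((INR n + 1) * th)%R with (th + INR n * th)%R by ring.
    rewrite cos_plus, sin_plus.
    apply injective_projections; simpl; ring.
Qed.

Lemma unit_root_pow_N N : (0 < N)%nat -> unit_root N ^ N = 1.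
Proof.
  intros HN. unfold unit_root. rewrite Cpow_cis.
  replace (INR N * (2 * PI / INR N))%R with (2 * PI)%R by (field; apply not_0_INR; lia).
  rewrite cos_2PI, sin_2PI. reflexivity.
Qed.

Lemma unit_root_pow_neq1 N t : (0 < t < N)%nat -> unit_root N ^ t <> 1.
Proof.
  intros H E. unfold unit_root in E. rewrite Cpow_cis in E.
  set (x := (INR t * (2 * PI / INR N))%R) in *.
  apply (f_equal fst) in E. simpl in E.
  assert (HN : (0 < INR N)%R) by (apply lt_0_INR; lia).
  assert (HtN : (0 < INR t < INR N)%R) by (split; [apply lt_0_INR | apply lt_INR]; lia).
  pose proof PI_RGT_0.
  (* cos x = 1 - 2 sin^2 (x/2) with 0 < x/2 < pi *)
  assert (Hx : (0 < x / 2 < PI)%R).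
  { unfold x. replace (INR t * (2 * PI / INR N) / 2)%R with (PI * (INR t / INR N))%R
      by (field; lra).
    assert (0 < INR t / INR N < 1)%R.
    { split; [apply Rdiv_lt_0_compat; lra|].
      apply (Rmult_lt_reg_r (INR N)); auto. field_simplify; lra. }
    nra. }
  pose proof (sin_gt_0 _ (proj1 Hx) (proj2 Hx)).
  pose proof (cos_2a_sin (x / 2)) as Hc.
  replace (2 * (x / 2))%R with x in Hc by field.
  nra.
Qed.

Lemma Cmod_unit_root N : Cmod (unit_root N) = 1%R.
Proof.
  unfold unit_root, Cmod. simpl. transitivity (sqrt 1); [f_equal | apply sqrt_1].
  pose proof (sin2_cos2 (2 * PI / INR N)) as E. unfold Rsqr in E. nra.
Qed.

Lemma csum_pow_unit_root N t : (0 < t < 2 * N)%nat ->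
  csum (fun m => (unit_root N ^ t) ^ m) N = if Nat.eqb t N then RtoC (INR N) else 0.
Proof.
  intros H. set (w := unit_root N ^ t).
  destruct (Nat.eqb_spec t N) as [->|E].
  - unfold w. rewrite unit_root_pow_N by lia.
    rewrite (csum_ext _ (fun _ => 1)) by (intros; apply Cpow_1_l).
    rewrite csum_const. ring.
  - assert (Hw : w - 1 <> 0).
    { intro Z. assert (Hw1 : w = 1) by (replace w with (w - 1 + 1) by ring; rewrite Z; ring).
      revert Hw1. unfold w.
      destruct (Nat.lt_ge_cases t N).
      - apply unit_root_pow_neq1. lia.
      - replace t with (N + (t - N))%nat by lia.
        rewrite Cpow_add_r, unit_root_pow_N, Cmult_1_l by lia.
        apply unit_root_pow_neq1. lia. }
    assert (HwN : w ^ N = 1).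
    { unfold w. rewrite <- Cpow_mult_r, Nat.mul_comm, Cpow_mult_r, unit_root_pow_N by lia.
      apply Cpow_1_l. }
    pose proof (csum_geom w N) as G. rewrite HwN in G.
    replace (csum (fun m => w ^ m) N)
      with (/ (w - 1) * ((w - 1) * csum (fun m => w ^ m) N)) by (field; exact Hw).
    rewrite G. ring.
Qed.

Lemma Cconj_pow_root_of_unity (z : C) N j : z ^ N = 1 -> Cmod z = 1%R -> (j <= N)%nat ->
  Cconj z ^ j = z ^ (N - j).
Proof.
  intros HN Hm Hj.
  assert (Hzc : z * Cconj z = 1).
  { rewrite <- Cmod2_conj, Hm. apply injective_projections; simpl; ring. }
  assert (A : Cconj z ^ j * z ^ j = 1).
  { rewrite <- Cpow_mult_l, Cmult_comm, Hzc. apply Cpow_1_l. }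
  assert (B : z ^ j * z ^ (N - j) = 1).
  { rewrite <- Cpow_add_r. replace (j + (N - j))%nat with N by lia. exact HN. }
  transitivity (Cconj z ^ j * (z ^ j * z ^ (N - j))).
  - rewrite B. ring.
  - rewrite Cmult_assoc, A. ring.
Qed.

(* Averaging over the N-th roots of unity w_m extracts the coefficient of
   degree j - k: w_m^k conj(w_m)^j = w_m^(k + N - j), and the average of
   w_m^(n + k + N - j) vanishes unless n + k = j. *)
Lemma csum_unit_root_monomial (e : nat -> C) (L N : nat) (r : C) (k j : nat) :
  (4 <= L)%nat -> (L + 4 <= N)%nat -> (k <= 3)%nat -> (j <= 3)%nat ->
  csum (fun m => psum e L (r * unit_root N ^ m) * (unit_root N ^ m) ^ k
                 * Cconj (unit_root N ^ m) ^ j) N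
  = if Nat.leb k j then INR N * (e (j - k)%nat * r ^ (j - k)) else 0.
Proof.
  intros HL HN Hk Hj.
  set (w := unit_root N).
  rewrite (csum_ext _ (fun m => csum (fun n => (e n * r ^ n) * (w ^ (n + k + (N - j))) ^ m) L)).
  2:{ intros m Hm. unfold psum.
      rewrite (Cconj_pow_root_of_unity (w ^ m) N j).
      2:{ unfold w. rewrite <- Cpow_mult_r, Nat.mul_comm, Cpow_mult_r, unit_root_pow_N by lia.
          apply Cpow_1_l. }
      2:{ unfold w. rewrite Cmod_pow, Cmod_unit_root. apply pow1. }
      2:{ lia. }
      rewrite <- Cmult_assoc, Cmult_comm, <- csum_scal.
      apply csum_ext. intros n Hn.
      rewrite <- (Cpow_mult_r w (n + k + (N - j)) m).
      replace ((n + k + (N - j)) * m)%nat with (m * n + m * k + m * (N - j))%nat by ring.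
      rewrite !Cpow_add_r, !Cpow_mult_r, Cpow_mult_l. ring. }
  rewrite csum_swap.
  rewrite (csum_ext _ (fun n => (e n * r ^ n) *
                               (if Nat.eqb (n + k + (N - j)) N then RtoC (INR N) else 0))).
  2:{ intros n Hn. unfold w. rewrite csum_scal, csum_pow_unit_root by lia. reflexivity. }
  destruct (Nat.leb_spec k j).
  - rewrite (csum_ext _ (fun n => if Nat.eqb n (j - k) then INR N * (e n * r ^ n) else 0)).
    + rewrite csum_delta, (proj2 (Nat.ltb_lt (j - k) L)) by lia. reflexivity.
    + intros n Hn.
      destruct (Nat.eqb_spec (n + k + (N - j)) N), (Nat.eqb_spec n (j - k)); try lia; ring.
  - rewrite (csum_ext _ (fun _ => 0)); [apply csum_zero|].
    intros n Hn. destruct (Nat.eqb_spec (n + k + (N - j)) N); try lia; ring.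
Qed.

Definition toeplitz_form (c0 c1 c2 c3 x0 x1 x2 x3 : C) : C :=
  c0 * (x0 * Cconj x0 + x1 * Cconj x1 + x2 * Cconj x2 + x3 * Cconj x3)
  + c1 * (x0 * Cconj x1 + x1 * Cconj x2 + x2 * Cconj x3)
  + c2 * (x0 * Cconj x2 + x1 * Cconj x3) + c3 * (x0 * Cconj x3).

Lemma csum_unit_root_toeplitz e L N r x : (4 <= L)%nat -> (L + 4 <= N)%nat ->
  csum (fun m => psum e L (r * unit_root N ^ m) * psum x 4 (unit_root N ^ m)
                 * Cconj (psum x 4 (unit_root N ^ m))) N
  = INR N * toeplitz_form (e 0%nat) (e 1%nat * r) (e 2%nat * r ^ 2) (e 3%nat * r ^ 3)
                          (x 0%nat) (x 1%nat) (x 2%nat) (x 3%nat).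
Proof.
  intros HL HN.
  rewrite (csum_ext _ (fun m => csum (fun k => csum (fun j => (x k * Cconj (x j)) *
     (psum e L (r * unit_root N ^ m) * (unit_root N ^ m) ^ k
      * Cconj (unit_root N ^ m) ^ j)) 4) 4)).
  2:{ intros m Hm. unfold psum at 2 3. rewrite csum_conj. simpl csum.
      rewrite ?Cplus_conj, ?Cmult_conj, ?Cpow_conj. simpl.
      replace (Cconj 1) with (RtoC 1) by (apply injective_projections; simpl; ring). ring. }
  rewrite csum_swap.
  rewrite (csum_ext _ (fun k => csum (fun j => (x k * Cconj (x j)) *
     (if Nat.leb k j then INR N * (e (j - k)%nat * r ^ (j - k)) else 0)) 4)).
  2:{ intros k Hk. rewrite csum_swap. apply csum_ext. intros j Hj.
      rewrite csum_scal, csum_unit_root_monomial by lia. reflexivity. }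
  unfold toeplitz_form. simpl. ring.
Qed.

Lemma Cmod_sub_le (x y : C) : (Cmod (x - y) <= Cmod x + Cmod y)%R.
Proof. unfold Cminus. eapply Rle_trans; [apply Cmod_triangle|]. rewrite Cmod_opp. lra. Qed.

Lemma sum_n_csum (a : nat -> C) N : @sum_n C_AbelianMonoid a N = csum a (S N).
Proof.
  induction N as [|N IH].
  - rewrite sum_O. simpl. change (a 0%nat = 0 + a 0%nat). ring.
  - rewrite sum_Sn, IH. reflexivity.
Qed.

Lemma C_ball_of_Cmod (x y : C) (eps : R) :
  (Cmod (y - x) < eps)%R -> @ball C_NormedModule x eps y.
Proof. intros H. apply norm_compat1. exact H. Qed.

Lemma Cmod_lt_of_C_ball (x y : C) (eps : posreal) :
  @ball C_NormedModule x eps y -> (Cmod (y - x) < 2 * eps)%R.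
Proof.
  intros H. pose proof (norm_compat2 x y eps H) as H1.
  change (Cmod (y - x) < sqrt 2 * eps)%R in H1.
  assert (sqrt 2 < 2)%R.
  { rewrite <- (sqrt_square 2) at 2 by lra. apply sqrt_lt_1; lra. }
  destruct eps as [e He]; simpl in *. nra.
Qed.

Lemma is_series_csum_close (a : nat -> C) (l : C) :
  @is_series C_AbsRing C_NormedModule a l ->
  forall eps, (0 < eps)%R ->
  exists N0, forall N, (N0 <= N)%nat -> (Cmod (csum a N - l) < eps)%R.
Proof.
  intros H eps Heps.
  destruct (proj1 (filterlim_locally _ _) H (mkposreal (eps / 2) ltac:(lra))) as [N0 HN0].
  exists (S N0). intros [|N] HN; [lia|].
  specialize (HN0 N ltac:(lia)). apply Cmod_lt_of_C_ball in HN0. simpl in HN0.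
  rewrite <- sum_n_csum. replace eps with (2 * (eps / 2))%R by field. exact HN0.
Qed.

Lemma Cmod_series_tail_le (g : nat -> C) (l : C) (B q : R) (M : nat) :
  @is_series C_AbsRing C_NormedModule g l -> (0 <= B)%R -> (0 <= q < 1)%R ->
  (forall n, (M <= n)%nat -> (Cmod (g n) <= B * q ^ n)%R) ->
  (Cmod (l - csum g M) <= B * q ^ M / (1 - q))%R.
Proof.
  intros Hs HB Hq Hg.
  assert (Hfin : forall j,
             (Cmod (csum g (M + j) - csum g M) <= B * q ^ M * (1 - q ^ j) / (1 - q))%R).
  { induction j as [|j IH].
    - rewrite Nat.add_0_r. replace (csum g M - csum g M) with (RtoC 0) by ring. rewrite Cmod_0. simpl.
      replace (B * q ^ M * (1 - 1) / (1 - q))%R with 0%R by (field; lra). lra.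
    - replace (M + S j)%nat with (S (M + j)) by lia. simpl csum.
      replace (csum g (M + j) + g (M + j)%nat - csum g M)
        with ((csum g (M + j) - csum g M) + g (M + j)%nat) by ring.
      eapply Rle_trans; [apply Cmod_triangle|].
      specialize (Hg (M + j)%nat ltac:(lia)). rewrite pow_add in Hg.
      replace (B * q ^ M * (1 - q ^ S j) / (1 - q))%R
        with (B * q ^ M * (1 - q ^ j) / (1 - q) + B * (q ^ M * q ^ j))%R by (simpl; field; lra).
      lra. }
  apply Rnot_lt_le. intros Hlt.
  set (D := (Cmod (l - csum g M) - B * q ^ M / (1 - q))%R).
  destruct (is_series_csum_close g l Hs D ltac:(unfold D; lra)) as [N0 HN0].
  specialize (HN0 (M + N0)%nat ltac:(lia)). specialize (Hfin N0).
  assert (B * q ^ M * (1 - q ^ N0) / (1 - q) <= B * q ^ M / (1 - q))%R.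
  { unfold Rdiv. apply Rmult_le_compat_r; [apply Rlt_le, Rinv_0_lt_compat; lra|].
    pose proof (pow_le q N0 ltac:(lra)). pose proof (pow_le q M ltac:(lra)).
    assert (0 <= B * q ^ M)%R by (apply Rmult_le_pos; lra). nra. }
  pose proof (Cmod_triangle (l - csum g (M + N0)) (csum g (M + N0) - csum g M)).
  replace (l - csum g (M + N0) + (csum g (M + N0) - csum g M)) with (l - csum g M) in H0
    by ring.
  rewrite <- Cmod_opp in HN0. replace (- (csum g (M + N0) - l)) with (l - csum g (M + N0)) in HN0
    by ring.
  unfold D in *. lra.
Qed.

Lemma series_coef_bounded (a : nat -> C) (l : C) (rho : R) : (0 < rho)%R ->
  @is_series C_AbsRing C_NormedModule (fun n => a n * RtoC rho ^ n) l ->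
  exists N0, forall n, (N0 <= n)%nat -> (Cmod (a n) * rho ^ n <= 1)%R.
Proof.
  intros Hr Hs.
  destruct (is_series_csum_close _ l Hs (1/2)%R ltac:(lra)) as [N0 HN0].
  exists N0. intros n Hn.
  pose proof (HN0 n Hn) as H1. pose proof (HN0 (S n) ltac:(lia)) as H2. simpl csum in H2.
  set (S0 := csum (fun k => a k * RtoC rho ^ k) n) in *.
  assert (Cmod (a n * RtoC rho ^ n) <= 1)%R.
  { replace (a n * RtoC rho ^ n) with ((S0 + a n * RtoC rho ^ n - l) - (S0 - l)) by ring.
    eapply Rle_trans; [apply Cmod_sub_le | lra]. }
  rewrite Cmod_mult, Cmod_pow, Cmod_R, Rabs_pos_eq in H by lra. exact H.
Qed.

Lemma Cmod_pow_sub_le (w z : C) (R : R) n : (Cmod w <= R)%R -> (Cmod z <= R)%R ->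
  (Cmod (w ^ S n - z ^ S n) <= INR (S n) * R ^ n * Cmod (w - z))%R.
Proof.
  intros Hw Hz. assert (HR : (0 <= R)%R) by (pose proof (Cmod_ge_0 w); lra).
  induction n as [|n IH].
  - simpl. replace (w * 1 - z * 1) with (w - z) by ring. lra.
  - replace (w ^ S (S n) - z ^ S (S n)) with (w * (w ^ S n - z ^ S n) + (w - z) * z ^ S n)
      by (rewrite !(Cpow_S _ (S n)); ring).
    eapply Rle_trans; [apply Cmod_triangle|].
    rewrite !Cmod_mult, Cmod_pow.
    assert (Cmod w * Cmod (w ^ S n - z ^ S n) <= R * (INR (S n) * R ^ n * Cmod (w - z)))%R
      by (apply Rmult_le_compat; auto using Cmod_ge_0).
    assert (Cmod (w - z) * Cmod z ^ S n <= Cmod (w - z) * R ^ S n)%R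
      by (apply Rmult_le_compat_l; [apply Cmod_ge_0 | apply pow_incr; auto using Cmod_ge_0]).
    rewrite (S_INR (S n)). simpl pow in *. lra.
Qed.

Lemma INR_mul_pow_inv_le (h : R) n : (0 < h)%R -> (INR n * (/ (1 + h)) ^ n <= / h)%R.
Proof.
  intros Hh.
  pose proof (Rle_pow_lin h n ltac:(lra)) as H.
  assert (Hp : (0 < (1 + h) ^ n)%R) by (apply pow_lt; lra).
  rewrite pow_inv.
  apply (Rmult_le_reg_r (h * (1 + h) ^ n)); [nra|].
  replace (INR n * / (1 + h) ^ n * (h * (1 + h) ^ n))%R with (INR n * h)%R by (field; lra).
  replace (/ h * (h * (1 + h) ^ n))%R with ((1 + h) ^ n)%R by (field; lra).
  lra.
Qed.

(* Coquelicot's differentiation rules produce derivatives for the normed module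
   [AbsRing_NormedModule C_AbsRing], whereas [is_cderiv_on_disk] uses the
   canonical [C_NormedModule]; both have the same underlying data. *)
Lemma is_derive_C_of_AbsRing (f : C -> C) x l :
  @is_derive C_AbsRing (AbsRing_NormedModule C_AbsRing) f x l ->
  @is_derive C_AbsRing C_NormedModule f x l.
Proof.
  intros [[A B [M [HM HM2]]] H2]. split; [split; [exact A | exact B | exists M; split; auto]|].
  intros y Hy. exact (H2 y Hy).
Qed.

Lemma is_derive_AbsRing_of_C (f : C -> C) x l :
  @is_derive C_AbsRing C_NormedModule f x l ->
  @is_derive C_AbsRing (AbsRing_NormedModule C_AbsRing) f x l.
Proof.
  intros [[A B [M [HM HM2]]] H2]. split; [split; [exact A | exact B | exists M; split; auto]|].
  intros y Hy. exact (H2 y Hy).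
Qed.

Lemma is_derive_eq {K : AbsRing} {V : NormedModule K} (f : K -> V) x l l' :
  is_derive f x l -> l = l' -> is_derive f x l'.
Proof. intros H <-. exact H. Qed.

Lemma is_derive_Cpow_S n z :
  @is_derive C_AbsRing (AbsRing_NormedModule C_AbsRing) (fun w : C => w ^ S n) z
    (INR (S n) * z ^ n).
Proof.
  induction n as [|n IH].
  - eapply is_derive_eq.
    + eapply is_derive_ext; [|apply (is_derive_id (K := C_AbsRing))].
      intros t. simpl. apply injective_projections; simpl; ring.
    + simpl. apply injective_projections; simpl; ring.
  - eapply is_derive_eq.
    + eapply is_derive_ext;
        [|apply (is_derive_mult (K := C_AbsRing) (fun w => w) (fun w => w ^ S n));
          [apply (is_derive_id (K := C_AbsRing)) | exact IH | intros; apply Cmult_comm]].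
      reflexivity.
    + change (1 * z ^ S n + z * (INR (S n) * z ^ n) = INR (S (S n)) * z ^ S n).
      rewrite (S_INR (S n)), RtoC_plus. simpl. ring.
Qed.

Definition deriv_coef (a : nat -> C) (k : nat) : C := a (S k) * INR (S k).

Lemma is_derive_psum a M z :
  @is_derive C_AbsRing C_NormedModule (psum a (S M)) z (psum (deriv_coef a) M z).
Proof.
  induction M as [|M IH].
  - eapply is_derive_eq.
    + eapply is_derive_ext;
        [|apply (is_derive_const (K := C_AbsRing) (V := C_NormedModule) (a 0%nat))].
      intros t. unfold psum. simpl. ring.
    + reflexivity.
  - eapply is_derive_eq.
    + eapply is_derive_ext;
        [|apply (is_derive_plus (K := C_AbsRing) (V := C_NormedModule)); [exact IH|]].
      2: apply (is_derive_scal_l (K := C_AbsRing) (V := C_NormedModule) (fun w => w ^ S M) z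
                  (INR (S M) * z ^ M) (a (S M))), is_derive_Cpow_S.
      intros t. change (psum a (S M) t + t ^ S M * a (S M) = psum a (S (S M)) t).
      unfold psum. simpl. ring.
    + change (psum (deriv_coef a) M z + (INR (S M) * z ^ M) * a (S M)
              = psum (deriv_coef a) (S M) z).
      unfold psum, deriv_coef. simpl. ring.
Qed.

Lemma Cmod_derive_le_of_lipschitz (phi : C -> C) z l (L dlt : R) :
  @is_derive C_AbsRing C_NormedModule phi z l -> (0 < dlt)%R ->
  (forall w, (Cmod (w - z) < dlt)%R -> (Cmod (phi w - phi z) <= L * Cmod (w - z))%R) ->
  (Cmod l <= L)%R.
Proof.
  intros [_ Hd] Hdlt Hlip.
  specialize (Hd z (fun P HP => HP)).
  apply Rnot_lt_le. intros Hlt.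
  set (eps := ((Cmod l - L) / 2)%R).
  destruct (Hd (mkposreal eps ltac:(unfold eps; lra))) as [e He]. simpl in He.
  set (h := (Rmin e dlt / 2)%R).
  assert (Hh : (0 < h < e /\ h < dlt)%R).
  { pose proof (Rmin_l e dlt). pose proof (Rmin_r e dlt).
    assert (0 < Rmin e dlt)%R by (apply Rmin_case; destruct e; simpl; lra).
    destruct e; unfold h; simpl in *; lra. }
  assert (Hwz : Cmod (z + RtoC h - z) = h).
  { replace (z + RtoC h - z) with (RtoC h) by ring. rewrite Cmod_R. apply Rabs_pos_eq. lra. }
  specialize (He (z + RtoC h)).
  assert (Hb : @ball (AbsRing_UniformSpace C_AbsRing) z e (z + RtoC h)).
  { change (Cmod (z + RtoC h - z) < e)%R. lra. }
  specialize (He Hb).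
  change (Cmod (phi (z + RtoC h)%C - phi z - (z + RtoC h - z) * l)
          <= eps * Cmod (z + RtoC h - z))%R in He.
  specialize (Hlip (z + RtoC h) ltac:(lra)).
  rewrite Hwz in He, Hlip.
  pose proof (Cmod_sub_le (phi (z + RtoC h) - phi z)
                          (phi (z + RtoC h) - phi z - (z + RtoC h - z) * l)) as Htri.
  replace (phi (z + RtoC h) - phi z - (phi (z + RtoC h) - phi z - (z + RtoC h - z) * l))
    with ((z + RtoC h - z) * l) in Htri by ring.
  rewrite Cmod_mult, Hwz in Htri.
  assert (h * Cmod l <= h * (L + eps))%R by lra.
  apply Rmult_le_reg_l in H; [unfold eps in H; lra | lra].
Qed.

(* n R0^(n-1) |w - z| R0^-n (1+h)^-2n <= |w - z| / (R0 h) (1+h)^-n,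
   since n (1+h)^-n <= 1/h. *)
Lemma Cmod_coef_mul_pow_sub_le (c w z : C) (R0 h : R) k :
  (0 < R0)%R -> (0 < h)%R -> (Cmod c * (R0 * (1 + h) ^ 2) ^ S k <= 1)%R ->
  (Cmod w <= R0)%R -> (Cmod z <= R0)%R ->
  (Cmod (c * (w ^ S k - z ^ S k)) <= Cmod (w - z) / (R0 * h) * (/ (1 + h)) ^ S k)%R.
Proof.
  intros HR0 Hh Hc Hw Hz.
  rewrite Cmod_mult.
  set (Q := ((1 + h) ^ S k)%R).
  assert (HQ : (0 < Q)%R) by (apply pow_lt; lra).
  assert (HR0k : (0 < R0 ^ k)%R) by (apply pow_lt; lra).
  assert (Hden : (0 < R0 ^ S k * Q * Q)%R).
  { apply Rmult_lt_0_compat; [apply Rmult_lt_0_compat; [apply pow_lt|]|]; lra. }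
  assert (Hc' : (Cmod c <= / (R0 ^ S k * Q * Q))%R).
  { replace ((R0 * (1 + h) ^ 2) ^ S k)%R with (R0 ^ S k * Q * Q)%R in Hc
      by (unfold Q; rewrite Rpow_mult_distr, <- pow_mult, Rmult_assoc, <- pow_add;
          do 2 f_equal; lia).
    apply (Rmult_le_reg_r (R0 ^ S k * Q * Q)); [exact Hden|].
    rewrite Rinv_l; lra. }
  pose proof (Cmod_pow_sub_le w z R0 k Hw Hz) as Hp.
  pose proof (INR_mul_pow_inv_le h (S k) Hh) as Hb.
  rewrite pow_inv in Hb |- *. fold Q in Hb |- *.
  eapply Rle_trans; [apply Rmult_le_compat; [apply Cmod_ge_0 | apply Cmod_ge_0 | exact Hc' | exact Hp]|].
  simpl pow.
  replace (/ (R0 * R0 ^ k * Q * Q) * (INR (S k) * R0 ^ k * Cmod (w - z)))%R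
    with ((INR (S k) * / Q) * (Cmod (w - z) / (R0 * Q)))%R by (field; lra).
  replace (Cmod (w - z) / (R0 * h) * / Q)%R with (/ h * (Cmod (w - z) / (R0 * Q)))%R
    by (field; lra).
  apply Rmult_le_compat_r; [|exact Hb].
  apply Rmult_le_pos; [apply Cmod_ge_0 | apply Rlt_le, Rinv_0_lt_compat; nra].
Qed.

Section SeriesRemainder.

Variables (f : C -> C) (a : nat -> C).
Hypothesis Hser : forall z, in_disk z ->
  @is_series C_AbsRing C_NormedModule (fun n => a n * z ^ n) (f z).

Lemma remainder_lipschitz (R0 h : R) (N0 M : nat) (w z : C) :
  (0 < R0 < 1)%R -> (0 < h)%R ->
  (forall n, (N0 <= n)%nat -> (Cmod (a n) * (R0 * (1 + h) ^ 2) ^ n <= 1)%R) ->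
  (N0 <= S M)%nat -> (Cmod w <= R0)%R -> (Cmod z <= R0)%R ->
  (Cmod ((f w - psum a (S M) w) - (f z - psum a (S M) z))
   <= (/ (1 + h)) ^ S M / (R0 * h * (1 - / (1 + h))) * Cmod (w - z))%R.
Proof.
  intros HR0 Hh Ha HM Hw Hz.
  set (q := (/ (1 + h))%R).
  assert (Hq : (0 < q < 1)%R).
  { unfold q. split; [apply Rinv_0_lt_compat; lra|].
    rewrite <- Rinv_1. apply Rinv_lt_contravar; lra. }
  set (g := fun n => a n * w ^ n - a n * z ^ n).
  assert (Hg : @is_series C_AbsRing C_NormedModule g (f w - f z)).
  { exact (is_series_minus _ _ _ _ (Hser w ltac:(unfold in_disk; lra))
                                   (Hser z ltac:(unfold in_disk; lra))). }
  set (B := (Cmod (w - z) / (R0 * h))%R).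
  assert (HB : (0 <= B)%R).
  { apply Rmult_le_pos; [apply Cmod_ge_0 | apply Rlt_le, Rinv_0_lt_compat; nra]. }
  assert (Hbound : forall n, (S M <= n)%nat -> (Cmod (g n) <= B * q ^ n)%R).
  { intros [|k] Hn; [lia|]. unfold g.
    replace (a (S k) * w ^ S k - a (S k) * z ^ S k) with (a (S k) * (w ^ S k - z ^ S k))
      by ring.
    apply Cmod_coef_mul_pow_sub_le; [lra | exact Hh | apply Ha; lia | exact Hw | exact Hz]. }
  pose proof (Cmod_series_tail_le g (f w - f z) B q (S M) Hg HB ltac:(lra) Hbound) as Ht.
  replace (csum g (S M)) with (psum a (S M) w - psum a (S M) z) in Ht
    by (unfold g, psum; symmetry; apply csum_minus).
  replace (f w - psum a (S M) w - (f z - psum a (S M) z))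
    with (f w - f z - (psum a (S M) w - psum a (S M) z)) by ring.
  eapply Rle_trans; [exact Ht|].
  unfold B. apply Req_le. field. lra.
Qed.

Lemma derive_psum_approx f' (r : R) : is_cderiv_on_disk f f' -> (0 <= r < 1)%R ->
  exists K q M0, (0 <= K)%R /\ (0 <= q < 1)%R /\
    forall M z, (M0 <= M)%nat -> (Cmod z <= r)%R ->
      (Cmod (f' z - psum (deriv_coef a) M z) <= K * q ^ M)%R.
Proof.
  intros Hder Hr.
  set (R0 := ((1 + r) / 2)%R).
  set (h := ((1 - R0) / 4)%R).
  set (rho := (R0 * (1 + h) ^ 2)%R).
  set (q := (/ (1 + h))%R).
  assert (HR0 : (0 < R0 < 1)%R) by (unfold R0; lra).
  assert (Hh : (0 < h)%R) by (unfold h; lra).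
  assert (Hrho : (0 < rho < 1)%R).
  { unfold rho, h. simpl. clearbody R0. split; [nra|].
    replace (R0 * (1 + (1 - R0) / 4) * ((1 + (1 - R0) / 4) * 1))%R
      with (1 + (R0 - 1) * (R0 * R0 - 9 * R0 + 16) / 16)%R by field.
    assert (0 < R0 * R0 - 9 * R0 + 16)%R by nra.
    assert ((R0 - 1) * (R0 * R0 - 9 * R0 + 16) < 0)%R by nra.
    lra. }
  assert (Hq : (0 < q < 1)%R).
  { unfold q. split; [apply Rinv_0_lt_compat; lra|].
    rewrite <- Rinv_1. apply Rinv_lt_contravar; lra. }
  destruct (series_coef_bounded a (f rho) rho ltac:(lra)
              (Hser rho ltac:(unfold in_disk; rewrite Cmod_R, Rabs_pos_eq; lra))) as [N0 HN0].
  set (K0 := (/ (R0 * h * (1 - q)))%R).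
  assert (HK0 : (0 < K0)%R).
  { apply Rinv_0_lt_compat. apply Rmult_lt_0_compat; nra. }
  exists K0, q, N0. split; [lra|]. split; [lra|].
  intros M z HM Hz.
  set (phi := fun w => f w - psum a (S M) w).
  assert (Hphi : @is_derive C_AbsRing C_NormedModule phi z (f' z - psum (deriv_coef a) M z)).
  { apply (is_derive_minus (K := C_AbsRing) (V := C_NormedModule));
      [apply Hder; unfold in_disk; lra | apply is_derive_psum]. }
  assert (Hlip : forall w, (Cmod (w - z) < R0 - r)%R ->
             (Cmod (phi w - phi z) <= (q ^ S M * K0) * Cmod (w - z))%R).
  { intros w Hw.
    assert (HwR : (Cmod w <= R0)%R).
    { replace w with ((w - z) + z) by ring. eapply Rle_trans; [apply Cmod_triangle | lra]. }
    unfold phi, q, K0.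
    replace (/ (1 + h) ^ S M * / (R0 * h * (1 - / (1 + h))))%R
      with (/ (1 + h) ^ S M / (R0 * h * (1 - / (1 + h))))%R by reflexivity.
    apply remainder_lipschitz with N0; [exact HR0 | exact Hh | exact HN0 | lia | exact HwR | unfold R0; lra]. }
  pose proof (Cmod_derive_le_of_lipschitz phi z _ _ (R0 - r) Hphi ltac:(unfold R0; lra) Hlip).
  eapply Rle_trans; [eassumption|].
  rewrite Rmult_comm. apply Rmult_le_compat_l; [lra|].
  simpl. pose proof (pow_le q M ltac:(lra)). nra.
Qed.

End SeriesRemainder.

Definition shift2 (b : nat -> C) (n : nat) : C :=
  match n with O => 0 | S O => 0 | S (S k) => b k end.

Lemma psum_shift2 b M z : z * z * psum b M z = psum (shift2 b) (M + 2) z.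
Proof.
  induction M as [|M IH].
  - unfold psum. simpl. ring.
  - replace (S M + 2)%nat with (S (M + 2)) by lia.
    unfold psum in *. simpl csum. rewrite <- IH.
    replace (M + 2)%nat with (S (S M)) by lia. simpl. ring.
Qed.

Lemma Cmod_psum4_le (x : nat -> C) (w : C) : Cmod w = 1%R ->
  (Cmod (psum x 4 w) <= Cmod (x 0%nat) + Cmod (x 1%nat) + Cmod (x 2%nat) + Cmod (x 3%nat))%R.
Proof.
  intros Hw. unfold psum. simpl csum.
  do 3 (eapply Rle_trans; [apply Cmod_triangle|];
         apply Rplus_le_compat; [|rewrite ?Cmod_mult, ?Hw, ?Cmod_1; lra]).
  rewrite Cplus_0_l, Cmod_mult, Cmod_1. lra.
Qed.

Lemma Re_mul_Cmod_sq_ge (p p' P : C) (E X : R) :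
  (0 < Re p)%R -> (Cmod (p - p') <= E)%R -> (Cmod P <= X)%R ->
  (- (E * (X * X)) <= Re (p' * P * Cconj P))%R.
Proof.
  intros Hp Hpp' HP.
  rewrite <- Cmult_assoc, <- Cmod2_conj.
  replace (Re (p' * RtoC (Cmod P ^ 2))) with (Re p' * Cmod P ^ 2)%R
    by (destruct p'; simpl; ring).
  assert (Re p - Re p' <= E)%R.
  { eapply Rle_trans; [|exact Hpp']. eapply Rle_trans; [apply Rle_abs | exact (re_le_Cmod (p - p'))]. }
  pose proof (Cmod_ge_0 P). pose proof (Cmod_ge_0 (p - p')).
  assert (0 <= Cmod P ^ 2 <= X * X)%R by (simpl; split; nra).
  nra.
Qed.

Lemma exists_mul_pow_le (q c eps : R) (M0 : nat) : (0 <= q < 1)%R -> (0 <= c)%R -> (0 < eps)%R ->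
  exists M, (M0 <= M)%nat /\ (c * q ^ M <= eps)%R.
Proof.
  intros Hq Hc Heps.
  destruct (pow_lt_1_zero q ltac:(rewrite Rabs_pos_eq; lra) (eps / (c + 1))
              ltac:(apply Rdiv_lt_0_compat; lra)) as [N1 HN1].
  exists (M0 + N1)%nat. split; [lia|].
  specialize (HN1 (M0 + N1)%nat ltac:(lia)).
  pose proof (pow_le q (M0 + N1) ltac:(lra)) as Hpos.
  rewrite Rabs_pos_eq in HN1 by exact Hpos.
  apply (Rmult_lt_compat_l (c + 1)) in HN1; [|lra].
  replace ((c + 1) * (eps / (c + 1)))%R with eps in HN1 by (field; lra).
  nra.
Qed.

Definition p_coef (a : nat -> C) (k : nat) : C := deriv_coef a k - shift2 (deriv_coef a) k.

Lemma csum_unit_root_p_toeplitz a M N (r : C) x : (4 <= M)%nat -> (M + 6 <= N)%nat ->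
  csum (fun m => (psum (deriv_coef a) M (r * unit_root N ^ m)
                  - psum (shift2 (deriv_coef a)) (M + 2) (r * unit_root N ^ m))
                 * psum x 4 (unit_root N ^ m) * Cconj (psum x 4 (unit_root N ^ m))) N
  = INR N * toeplitz_form (p_coef a 0) (p_coef a 1 * r) (p_coef a 2 * r ^ 2) (p_coef a 3 * r ^ 3)
                          (x 0%nat) (x 1%nat) (x 2%nat) (x 3%nat).
Proof.
  intros HM HN.
  rewrite (csum_ext _ (fun m =>
      psum (deriv_coef a) M (r * unit_root N ^ m) * psum x 4 (unit_root N ^ m)
        * Cconj (psum x 4 (unit_root N ^ m))
      - psum (shift2 (deriv_coef a)) (M + 2) (r * unit_root N ^ m) * psum x 4 (unit_root N ^ m)
        * Cconj (psum x 4 (unit_root N ^ m)))) by (intros; ring).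
  rewrite csum_minus, !csum_unit_root_toeplitz by lia.
  unfold toeplitz_form, p_coef. simpl. ring.
Qed.

(* Average Re p(r w) |P(w)|^2 >= 0, for P of degree 3, over the N-th roots of
   unity w. With f' replaced by a Taylor polynomial the average is exactly N
   times the Toeplitz form; the replacement error vanishes as the degree grows. *)
Lemma toeplitz_form_nonneg f f' a (r : R) x0 x1 x2 x3 :
  class_F2 f f' a -> (0 < r < 1)%R ->
  (0 <= Re (toeplitz_form (p_coef a 0) (p_coef a 1 * r) (p_coef a 2 * RtoC r ^ 2)
                          (p_coef a 3 * RtoC r ^ 3) x0 x1 x2 x3))%R.
Proof.
  intros [[_ [_ Hser]] [HD Hpos]] Hr.
  destruct (derive_psum_approx f a Hser f' r HD ltac:(lra)) as [K [q [M0 [HK [Hq Happ]]]]].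
  set (x := fun k : nat => match k with 0 => x0 | 1 => x1 | 2 => x2 | _ => x3 end).
  set (X := (Cmod x0 + Cmod x1 + Cmod x2 + Cmod x3)%R).
  apply Rle_plus_epsilon. intros eps Heps.
  assert (HX : (0 <= 2 * K * (X * X))%R) by (pose proof (Rle_0_sqr X); unfold Rsqr in *; nra).
  destruct (exists_mul_pow_le q (2 * K * (X * X)) eps (M0 + 4) Hq HX Heps) as [M [HM Herr]].
  set (N := (M + 6)%nat).
  set (b := deriv_coef a).
  set (w := fun m => unit_root N ^ m).
  set (term := fun m => (psum b M (r * w m) - psum (shift2 b) (M + 2) (r * w m))
                        * psum x 4 (w m) * Cconj (psum x 4 (w m))).
  assert (Hsum : csum term N = INR N * toeplitz_form (p_coef a 0) (p_coef a 1 * r)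
                 (p_coef a 2 * RtoC r ^ 2) (p_coef a 3 * RtoC r ^ 3) x0 x1 x2 x3)
    by exact (csum_unit_root_p_toeplitz a M N r x ltac:(lia) ltac:(unfold N; lia)).
  assert (Hterm : forall m, (m < N)%nat -> (- (2 * K * q ^ M * (X * X)) <= Re (term m))%R).
  { intros m _. unfold term.
    assert (Hw : Cmod (w m) = 1%R) by (unfold w; rewrite Cmod_pow, Cmod_unit_root; apply pow1).
    set (z := RtoC r * w m).
    assert (Hz : Cmod z = r) by (unfold z; rewrite Cmod_mult, Hw, Cmod_R, Rabs_pos_eq; lra).
    replace (- (2 * K * q ^ M * (X * X)))%R with (- ((2 * (K * q ^ M)) * (X * X)))%R by ring.
    apply Re_mul_Cmod_sq_ge with ((1 - z * z) * f' z).
    - apply Hpos. unfold in_disk. lra.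
    - rewrite <- psum_shift2.
      replace ((1 - z * z) * f' z - (psum b M z - z * z * psum b M z))
        with ((1 - z * z) * (f' z - psum b M z)) by ring.
      rewrite Cmod_mult. apply Rmult_le_compat; try apply Cmod_ge_0.
      + eapply Rle_trans; [apply Cmod_sub_le|]. rewrite Cmod_1, Cmod_mult, Hz. nra.
      + apply Happ; [lia | lra].
    - apply Cmod_psum4_le. exact Hw. }
  pose proof (Re_csum_ge term _ N Hterm) as Hlow.
  rewrite Hsum in Hlow.
  replace (Re (INR N * _)) with (INR N * Re (toeplitz_form (p_coef a 0) (p_coef a 1 * r)
             (p_coef a 2 * RtoC r ^ 2) (p_coef a 3 * RtoC r ^ 3) x0 x1 x2 x3))%R in Hlow
    by (destruct (toeplitz_form _ _ _ _ _ _ _ _); simpl; ring).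
  assert (HN : (0 < INR N)%R) by (apply lt_0_INR; unfold N; lia).
  assert (- (2 * K * q ^ M * (X * X)) <= Re (toeplitz_form (p_coef a 0) (p_coef a 1 * r)
             (p_coef a 2 * RtoC r ^ 2) (p_coef a 3 * RtoC r ^ 3) x0 x1 x2 x3))%R
    by (apply Rmult_le_reg_l with (INR N); lra).
  lra.
Qed.

Definition Cnorm2 (z : C) : R := (Re z ^ 2 + Im z ^ 2)%R.

Lemma Cnorm2_Cmod (z : C) : Cnorm2 z = (Cmod z ^ 2)%R.
Proof. unfold Cnorm2. rewrite Cmod2_alt. reflexivity. Qed.

Lemma Cnorm2_ge0 z : (0 <= Cnorm2 z)%R.
Proof. unfold Cnorm2. nra. Qed.

Lemma Cnorm2_mul_RtoC (c : C) (r : R) : Cnorm2 (c * RtoC r) = (Cnorm2 c * r ^ 2)%R.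
Proof. unfold Cnorm2. destruct c; simpl. ring. Qed.

(* [hankel_p c1 c2 c3] is 8 H_{2,1} written in the coefficients c_k of
   p = (1 - z^2) f', using a2 = c1/2, a3 = (c2 + 1)/3, a4 = (c3 + c1)/4. *)
Definition hankel_p (c1 c2 c3 : C) : C :=
  let a2 := c1 / 2 in let a3 := (c2 + 1) / 3 in let a4 := (c3 + c1) / 4 in
  a2 * a4 + a2 * a2 * a3 - 2 * a3 * a3 - a2 * a2 * a2 * a2 / 6.

Lemma Cnorm2_le_of_toeplitz_nonneg (c1 c2 c3 : C) :
  (forall x0 x1 x2 x3, (0 <= Re (toeplitz_form 1 c1 c2 c3 x0 x1 x2 x3))%R) ->
  (Cnorm2 c1 <= 4)%R.
Proof.
  intros H. specialize (H (- Cconj c1 / 2) 1 0 0).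
  replace (Re (toeplitz_form 1 c1 c2 c3 (- Cconj c1 / 2) 1 0 0))
    with (1 - Cnorm2 c1 / 4)%R in H.
  - lra.
  - destruct c1, c2, c3. unfold toeplitz_form, Cnorm2. simpl. field.
Qed.

Lemma hankel_p_param (u D2 D3 : C) :
  let s := (1 - Cnorm2 u)%R in s <> 0%R ->
  let v := D2 / (2 * s) in
  36 * hankel_p (2 * u) (2 * u * u + D2)
                (2 * u * u * u + 2 * u * D2 - Cconj u * D2 * D2 / (2 * s) + D3)
  = 4 * u * u * u * u - 4 * s * u * u * v - s * (32 - 14 * Cnorm2 u) * v * v - 2 * u * u
    - 32 * s * v - 8 + 9 * u * D3.
Proof.
  intros s Hs v. unfold v, s in *.
  destruct u as [p1 q1], D2 as [p2 q2], D3 as [p3 q3].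
  unfold hankel_p, Cnorm2 in *. simpl in *.
  apply injective_projections; simpl; field; lra.
Qed.

Lemma param_poly_le (t r : R) : (0 <= t < 1)%R -> (0 <= r <= 1)%R ->
  (4 * t ^ 4 + 4 * (1 - t ^ 2) * t ^ 2 * r + (1 - t ^ 2) * (32 - 14 * t ^ 2) * r ^ 2 + 2 * t ^ 2
   + 32 * (1 - t ^ 2) * r + 8 + 9 * t * (2 * (1 - t ^ 2) * (1 - r ^ 2)) <= 72)%R.
Proof.
  intros Ht Hr.
  (* 72 - lhs = t^2 (72 - 14 t^2) + (1 - t^2) ((1 - r)(4 t^2 + 32) + (1 - r^2)(1 - t)(32 + 14 t)) *)
  assert (0 <= t ^ 2 * (72 - 14 * t ^ 2))%R by (apply Rmult_le_pos; nra).
  assert (0 <= (1 - r ^ 2) * (1 - t) * (32 + 14 * t))%R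
    by (apply Rmult_le_pos; [apply Rmult_le_pos|]; nra).
  assert (0 <= (1 - t ^ 2) * ((1 - r) * (4 * t ^ 2 + 32) + (1 - r ^ 2) * (1 - t) * (32 + 14 * t)))%R
    by (apply Rmult_le_pos; nra).
  nra.
Qed.

Lemma Cmod_param_poly_le (u v D3 : C) :
  let s := (1 - Cnorm2 u)%R in
  (Cmod u < 1)%R -> (Cmod v <= 1)%R -> (Cmod D3 <= 2 * s * (1 - Cmod v ^ 2))%R ->
  (Cmod (4 * u * u * u * u - 4 * s * u * u * v - s * (32 - 14 * Cnorm2 u) * v * v - 2 * u * u
         - 32 * s * v - 8 + 9 * u * D3) <= 72)%R.
Proof.
  intros s Hu Hv HD3.
  assert (Hs : s = (1 - Cmod u ^ 2)%R) by (unfold s; rewrite Cnorm2_Cmod; reflexivity).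
  pose proof (Cmod_ge_0 u). pose proof (Cmod_ge_0 v).
  assert (Hc : 32 - 14 * RtoC (Cnorm2 u) = RtoC (32 - 14 * Cmod u ^ 2)%R).
  { rewrite <- Cnorm2_Cmod. apply injective_projections; simpl; ring. }
  rewrite Hc.
  set (A1 := 4 * u * u * u * u). set (A2 := 4 * s * u * u * v).
  set (A3 := s * RtoC (32 - 14 * Cmod u ^ 2) * v * v). set (A4 := 2 * u * u).
  set (A5 := 32 * s * v). set (A7 := 9 * u * D3).
  pose proof (Cmod_triangle (A1 - A2 - A3 - A4 - A5 - 8) A7).
  pose proof (Cmod_sub_le (A1 - A2 - A3 - A4 - A5) 8).
  pose proof (Cmod_sub_le (A1 - A2 - A3 - A4) A5).
  pose proof (Cmod_sub_le (A1 - A2 - A3) A4).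
  pose proof (Cmod_sub_le (A1 - A2) A3).
  pose proof (Cmod_sub_le A1 A2).
  pose proof (param_poly_le (Cmod u) (Cmod v) ltac:(lra) ltac:(lra)) as Hpoly.
  unfold A1, A2, A3, A4, A5, A7 in *.
  rewrite !Cmod_mult, !Cmod_R in *.
  rewrite !Rabs_pos_eq in * by (rewrite ?Hs; nra).
  rewrite <- Hs in Hpoly.
  assert (9 * Cmod u * Cmod D3 <= 9 * Cmod u * (2 * s * (1 - Cmod v ^ 2)))%R
    by (apply Rmult_le_compat_l; lra).
  simpl pow in *. nra.
Qed.

(* The Schur–Carathéodory parametrisation of a nonnegative Toeplitz form:
   c1 = 2u, c2 = 2u^2 + D2 with |D2| <= 2(1 - |u|^2), and c3 is determined up to
   a term D3 confined to a disk whose radius is given by [Cnorm2_D3_le]. *)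
Section ToeplitzParametrisation.

Variables u D2 D3 : C.
Let s := (1 - Cnorm2 u)%R.
Hypothesis Hs : (0 < s)%R.
Let c3 := 2 * u * u * u + 2 * u * D2 - Cconj u * D2 * D2 / (2 * s) + D3.
Hypothesis Hform : forall x0 x1 x2 x3,
  (0 <= Re (toeplitz_form 1 (2 * u) (2 * u * u + D2) c3 x0 x1 x2 x3))%R.

Lemma Cnorm2_D2_le : (Cnorm2 D2 <= 4 * s * s)%R.
Proof.
  pose proof (Hform (- Cconj D2) (Cconj D2 * u - 2 * s * Cconj u) (2 * s) 0) as H.
  replace (Re (toeplitz_form 1 (2 * u) (2 * u * u + D2) c3 (- Cconj D2)
                 (Cconj D2 * u - 2 * s * Cconj u) (2 * s) 0))
    with (s * (4 * s * s - Cnorm2 D2))%R in H.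
  - assert (0 <= 4 * s * s - Cnorm2 D2)%R; [|lra].
    apply Rmult_le_reg_l with s; lra.
  - unfold s, c3. destruct u as [p1 q1], D2 as [p2 q2], D3 as [p3 q3].
    unfold toeplitz_form, Cnorm2. simpl. field. lra.
Qed.

Let N2 := (s * (s * s - Cnorm2 D2 / 4))%R.

Lemma D3_quadratic_nonneg (lam : C) :
  (0 <= N2 * (1 + Cnorm2 lam) - Re (Cconj lam * (s * s) * D3))%R.
Proof.
  set (a2 := RtoC s). set (a1 := - s * u + D2 * Cconj u / 2). set (a0 := - D2 / 2).
  pose proof (Hform (Cconj (- lam * Cconj a2)) (Cconj (a0 - lam * Cconj a1))
                    (Cconj (a1 - lam * Cconj a0)) (Cconj a2)) as H.
  replace (Re (toeplitz_form 1 (2 * u) (2 * u * u + D2) c3 (Cconj (- lam * Cconj a2))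
                 (Cconj (a0 - lam * Cconj a1)) (Cconj (a1 - lam * Cconj a0)) (Cconj a2)))
    with (N2 * (1 + Cnorm2 lam) - Re (Cconj lam * (s * s) * D3))%R in H; [exact H|].
  unfold a2, a1, a0, N2, c3.
  assert (Hs0 : s <> 0%R) by lra. revert Hs0. unfold s.
  destruct u as [p1 q1], D2 as [p2 q2], D3 as [p3 q3], lam as [l1 l2].
  unfold toeplitz_form, Cnorm2. simpl. intros. field. lra.
Qed.

Lemma Cnorm2_D3_le : (s ^ 4 * Cnorm2 D3 <= 4 * N2 * N2)%R.
Proof.
  assert (HN2 : (0 <= N2)%R) by (pose proof Cnorm2_D2_le; unfold N2; apply Rmult_le_pos; lra).
  assert (Hk : forall k : R, (0 <= N2 * (1 + k ^ 2 * Cnorm2 D3) - k * (s * s) * Cnorm2 D3)%R).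
  { intros k. pose proof (D3_quadratic_nonneg (RtoC k * D3)) as H.
    replace (Cnorm2 (RtoC k * D3)) with (k ^ 2 * Cnorm2 D3)%R in H
      by (unfold Cnorm2; destruct D3; simpl; ring).
    replace (Re (Cconj (RtoC k * D3) * (s * s) * D3)) with (k * (s * s) * Cnorm2 D3)%R in H
      by (unfold Cnorm2; destruct D3; simpl; ring).
    exact H. }
  pose proof (Cnorm2_ge0 D3).
  destruct (Req_EM_T N2 0) as [Hz|Hnz].
  - specialize (Hk 1%R). rewrite Hz in Hk |- *.
    assert (0 < s * s)%R by nra. assert (Cnorm2 D3 = 0)%R by nra.
    rewrite H1. lra.
  - (* the optimal choice k = s^2 / (2 N2) *)
    specialize (Hk (s * s / (2 * N2))%R).
    replace (N2 * (1 + (s * s / (2 * N2)) ^ 2 * Cnorm2 D3)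
             - s * s / (2 * N2) * (s * s) * Cnorm2 D3)%R
      with ((4 * N2 * N2 - s ^ 4 * Cnorm2 D3) / (4 * N2))%R in Hk by (field; lra).
    assert (0 < 4 * N2)%R by lra.
    apply Rmult_le_reg_r with (/ (4 * N2))%R; [apply Rinv_0_lt_compat; lra|].
    unfold Rdiv in Hk. lra.
Qed.

Let v := D2 / (2 * s).

Lemma Cmod_v_sq : (Cmod v ^ 2 = Cnorm2 D2 / (4 * s * s))%R.
Proof. rewrite <- Cnorm2_Cmod. unfold v, Cnorm2. destruct D2. simpl. field. lra. Qed.

Lemma Cmod_v_le : (Cmod v <= 1)%R.
Proof.
  pose proof (Cmod_ge_0 v). pose proof Cnorm2_D2_le.
  assert (Cmod v ^ 2 <= 1)%R
    by (rewrite Cmod_v_sq; apply Rmult_le_reg_r with (4 * s * s)%R; [nra | field_simplify; lra]).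
  nra.
Qed.

Lemma Cmod_D3_le : (Cmod D3 <= 2 * s * (1 - Cmod v ^ 2))%R.
Proof.
  pose proof Cnorm2_D3_le as HD3. unfold N2 in HD3.
  replace (s * (s * s - Cnorm2 D2 / 4))%R with (s ^ 3 * (1 - Cmod v ^ 2))%R in HD3
    by (rewrite Cmod_v_sq; field; lra).
  rewrite Cnorm2_Cmod in HD3.
  pose proof (Cmod_ge_0 D3). pose proof (Cmod_ge_0 v). pose proof Cmod_v_le.
  assert (0 <= 2 * s * (1 - Cmod v ^ 2))%R by (apply Rmult_le_pos; nra).
  assert (Cmod D3 ^ 2 <= (2 * s * (1 - Cmod v ^ 2)) ^ 2)%R.
  { apply Rmult_le_reg_l with (s ^ 4)%R; [apply pow_lt; lra | nra]. }
  nra.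
Qed.

Lemma Cmod_hankel_p_param_le : (Cmod (hankel_p (2 * u) (2 * u * u + D2) c3) <= 2)%R.
Proof.
  assert (Hu : (Cmod u < 1)%R).
  { pose proof (Cmod_ge_0 u). pose proof (Cnorm2_Cmod u). unfold s in Hs. nra. }
  assert (Hb : (Cmod (4 * u * u * u * u - 4 * s * u * u * v - s * (32 - 14 * Cnorm2 u) * v * v
                      - 2 * u * u - 32 * s * v - 8 + 9 * u * D3) <= 72)%R)
    by exact (Cmod_param_poly_le u v D3 Hu Cmod_v_le Cmod_D3_le).
  assert (E : 36 * hankel_p (2 * u) (2 * u * u + D2) c3
              = 4 * u * u * u * u - 4 * s * u * u * v - s * (32 - 14 * Cnorm2 u) * v * v
                - 2 * u * u - 32 * s * v - 8 + 9 * u * D3)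
    by exact (hankel_p_param u D2 D3 ltac:(unfold s in Hs; lra)).
  rewrite <- E in Hb.
  rewrite Cmod_mult, Cmod_R, Rabs_pos_eq in Hb by lra.
  lra.
Qed.

End ToeplitzParametrisation.


Lemma Cmod_hankel_p_le (c1 c2 c3 : C) : (Cnorm2 c1 < 4)%R ->
  (forall x0 x1 x2 x3, (0 <= Re (toeplitz_form 1 c1 c2 c3 x0 x1 x2 x3))%R) ->
  (Cmod (hankel_p c1 c2 c3) <= 2)%R.
Proof.
  intros Hc1 Hform.
  set (u := c1 / 2).
  set (s := (1 - Cnorm2 u)%R).
  assert (Hs : (0 < s)%R).
  { unfold s, u. replace (Cnorm2 (c1 / 2)) with (Cnorm2 c1 / 4)%R; [lra|].
    unfold Cnorm2. destruct c1. simpl. field. }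
  set (D2 := c2 - 2 * u * u).
  set (D3 := c3 - (2 * u * u * u + 2 * u * D2 - Cconj u * D2 * D2 / (2 * s))).
  replace c1 with (2 * u) in Hform |- * by (unfold u; field).
  replace c2 with (2 * u * u + D2) in Hform |- * by (unfold D2; ring).
  replace c3 with (2 * u * u * u + 2 * u * D2 - Cconj u * D2 * D2 / (2 * s) + D3) in Hform |- *
    by (unfold D3; ring).
  exact (Cmod_hankel_p_param_le u D2 D3 Hs Hform).
Qed.

Lemma le_of_forall_lt_1 (x b K : R) : (0 <= K)%R ->
  (forall r, (0 < r < 1)%R -> (x <= b + K * (1 - r))%R) -> (x <= b)%R.
Proof.
  intros HK H. apply Rnot_lt_le. intros Hlt.
  set (t := Rmin (1 / 2) ((x - b) / (2 * (K + 1)))).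
  assert (Ht : (0 < t <= 1 / 2)%R).
  { unfold t. split; [apply Rmin_case; [lra | apply Rdiv_lt_0_compat; lra] | apply Rmin_l]. }
  assert (Ht2 : (t * (2 * (K + 1)) <= x - b)%R).
  { pose proof (Rmin_r (1 / 2) ((x - b) / (2 * (K + 1)))) as Hm. fold t in Hm.
    apply Rmult_le_compat_r with (r := (2 * (K + 1))%R) in Hm; [|lra].
    replace ((x - b) / (2 * (K + 1)) * (2 * (K + 1)))%R with (x - b)%R in Hm by (field; lra).
    exact Hm. }
  specialize (H (1 - t)%R ltac:(lra)). nra.
Qed.

Lemma hankel_p_scaled (c1 c2 c3 : C) (r : R) :
  hankel_p (c1 * RtoC r) (c2 * RtoC r ^ 2) (c3 * RtoC r ^ 3)
  = RtoC (- 2 / 9) + (5 * c1 * c1 / 24 - 4 * c2 / 9) * RtoC (r ^ 2)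
    + (c1 * c3 / 8 + c1 * c1 * c2 / 12 - 2 * c2 * c2 / 9 - c1 * c1 * c1 * c1 / 96) * RtoC (r ^ 4).
Proof.
  unfold hankel_p. rewrite <- !RtoC_pow.
  apply injective_projections; destruct c1, c2, c3; simpl; field.
Qed.

Lemma Cmod_hankel_p_le_scaled (c1 c2 c3 : C) : exists K, (0 <= K)%R /\
  forall r, (0 < r < 1)%R ->
  (Cmod (hankel_p c1 c2 c3)
   <= Cmod (hankel_p (c1 * RtoC r) (c2 * RtoC r ^ 2) (c3 * RtoC r ^ 3)) + K * (1 - r))%R.
Proof.
  set (W2 := 5 * c1 * c1 / 24 - 4 * c2 / 9).
  set (W4 := c1 * c3 / 8 + c1 * c1 * c2 / 12 - 2 * c2 * c2 / 9 - c1 * c1 * c1 * c1 / 96).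
  exists (2 * Cmod W2 + 4 * Cmod W4)%R.
  pose proof (Cmod_ge_0 W2). pose proof (Cmod_ge_0 W4).
  split; [lra|]. intros r Hr.
  pose proof (hankel_p_scaled c1 c2 c3 r) as Er. pose proof (hankel_p_scaled c1 c2 c3 1) as E1.
  replace (c1 * RtoC 1) with c1 in E1 by ring.
  replace (c2 * RtoC 1 ^ 2) with c2 in E1 by (simpl; ring).
  replace (c3 * RtoC 1 ^ 3) with c3 in E1 by (simpl; ring).
  rewrite !pow1 in E1.
  fold W2 W4 in Er, E1. rewrite E1, Er.
  replace (RtoC (- 2 / 9) + W2 * RtoC 1 + W4 * RtoC 1)
    with ((RtoC (- 2 / 9) + W2 * RtoC (r ^ 2) + W4 * RtoC (r ^ 4))
          + (W2 * RtoC (1 - r ^ 2) + W4 * RtoC (1 - r ^ 4)))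
    by (rewrite !RtoC_minus, !RtoC_pow; ring).
  eapply Rle_trans; [apply Cmod_triangle|]. apply Rplus_le_compat_l.
  eapply Rle_trans; [apply Cmod_triangle|].
  rewrite !Cmod_mult, !Cmod_R.
  assert (Hr2 : (0 <= 1 - r ^ 2 <= 2 * (1 - r))%R) by (simpl; nra).
  assert (Hr4 : (0 <= 1 - r ^ 4 <= 4 * (1 - r))%R).
  { replace (r ^ 4)%R with (r ^ 2 * r ^ 2)%R by ring. simpl. nra. }
  rewrite (Rabs_pos_eq (1 - r ^ 2)), (Rabs_pos_eq (1 - r ^ 4)) by lra.
  nra.
Qed.

Lemma p_coef_0 (a : nat -> C) : a 1%nat = 1 -> p_coef a 0 = 1.
Proof. intros Ha1. unfold p_coef, deriv_coef, shift2. rewrite Ha1. simpl. ring. Qed.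

Lemma H21_hankel_p (a : nat -> C) : a 1%nat = 1 ->
  H21 a = hankel_p (p_coef a 1) (p_coef a 2) (p_coef a 3) / 8.
Proof.
  intros Ha1. unfold H21, gamma1, gamma2, gamma3, hankel_p, p_coef, deriv_coef, shift2.
  rewrite Ha1. simpl. rewrite ?RtoC_plus. field.
Qed.

Lemma Cmod_H21_le f f' a : class_F2 f f' a -> (Cmod (H21 a) <= / 4)%R.
Proof.
  intros HF. pose proof HF as [[_ [Ha1 _]] _].
  set (c1 := p_coef a 1). set (c2 := p_coef a 2). set (c3 := p_coef a 3).
  assert (HT : forall r, (0 < r < 1)%R -> forall x0 x1 x2 x3,
     (0 <= Re (toeplitz_form 1 (c1 * RtoC r) (c2 * RtoC r ^ 2) (c3 * RtoC r ^ 3) x0 x1 x2 x3))%R).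
  { intros r Hr x0 x1 x2 x3. rewrite <- (p_coef_0 a Ha1). apply toeplitz_form_nonneg with f f'; auto. }
  assert (Hc1 : (Cnorm2 c1 <= 4)%R).
  { apply le_of_forall_lt_1 with (2 * Cnorm2 c1)%R; [pose proof (Cnorm2_ge0 c1); lra|].
    intros r Hr.
    pose proof (Cnorm2_le_of_toeplitz_nonneg _ _ _ (HT r Hr)) as H.
    rewrite Cnorm2_mul_RtoC in H. pose proof (Cnorm2_ge0 c1). simpl in H.
    assert (Cnorm2 c1 * (1 - r * r) <= Cnorm2 c1 * (2 * (1 - r)))%R
      by (apply Rmult_le_compat_l; nra).
    nra. }
  destruct (Cmod_hankel_p_le_scaled c1 c2 c3) as [K [HK Hscaled]].
  assert (HW : (Cmod (hankel_p c1 c2 c3) <= 2)%R).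
  { apply le_of_forall_lt_1 with K; [exact HK|]. intros r Hr.
    eapply Rle_trans; [apply Hscaled, Hr|]. apply Rplus_le_compat_r.
    apply Cmod_hankel_p_le; [|apply HT, Hr].
    rewrite Cnorm2_mul_RtoC. pose proof (Cnorm2_ge0 c1).
    destruct (Req_EM_T (Cnorm2 c1) 0) as [->|]; [lra|]. simpl. nra. }
  rewrite H21_hankel_p by exact Ha1. fold c1 c2 c3.
  unfold Cdiv. rewrite Cmod_mult.
  replace (Cmod (/ 8)) with (/ 8)%R.
  - lra.
  - rewrite Cmod_inv, Cmod_R, Rabs_pos_eq; [reflexivity | lra|].
    intro E. apply (f_equal fst) in E. simpl in E. lra.
Qed.

Lemma one_minus_sq_neq0 (z : C) : (Cmod z < 1)%R -> 1 - z * z <> 0.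
Proof.
  intros Hz E.
  assert (H : z * z = 1) by (replace (z * z) with (1 - (1 - z * z)) by ring; rewrite E; ring).
  apply (f_equal Cmod) in H. rewrite Cmod_mult, Cmod_1 in H.
  pose proof (Cmod_ge_0 z). nra.
Qed.

Lemma Cmod_one_minus_sq_ge (z : C) : (1 - Cmod z ^ 2 <= Cmod (1 - z * z))%R.
Proof.
  pose proof (Cmod_triangle (1 - z * z) (z * z)) as H.
  replace (1 - z * z + z * z) with (RtoC 1) in H by ring.
  rewrite Cmod_1, Cmod_mult in H. simpl. lra.
Qed.

Lemma psum_a_ext_even (z : C) k :
  (1 - z * z) * psum a_ext (2 * k) z = z - z ^ (2 * k + 1) /\
  psum a_ext (2 * k + 1) z = psum a_ext (2 * k) z.
Proof.
  unfold psum. induction k as [|k [H1 H2]].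
  - simpl. split; [ring | unfold a_ext; simpl; ring].
  - assert (E1 : csum (fun n => a_ext n * z ^ n) (2 * S k)
                 = csum (fun n => a_ext n * z ^ n) (2 * k) + z ^ (2 * k + 1)).
    { replace (2 * S k)%nat with (S (2 * k + 1)) by lia. cbn [csum]. rewrite H2.
      unfold a_ext at 2. rewrite Nat.odd_odd. ring. }
    split.
    + rewrite E1, Cmult_plus_distr_l, H1.
      replace (2 * S k + 1)%nat with (2 + (2 * k + 1))%nat by lia.
      rewrite (Cpow_add_r z 2 (2 * k + 1)). replace (z ^ 2) with (z * z) by (simpl; ring). ring.
    + replace (2 * S k + 1)%nat with (S (2 * S k)) by lia. cbn [csum].
      unfold a_ext at 2. rewrite Nat.odd_even. ring.
Qed.

Lemma Cmod_psum_a_ext_sub_le (z : C) n : (Cmod z < 1)%R ->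
  (Cmod (psum a_ext n z - f_ext z) <= Cmod z ^ n / (1 - Cmod z ^ 2))%R.
Proof.
  intros Hz. pose proof (Cmod_ge_0 z) as Hz0.
  assert (Hnz : 1 - z * z <> 0) by (apply one_minus_sq_neq0; exact Hz).
  assert (Hd : (0 < 1 - Cmod z ^ 2)%R) by (simpl; nra).
  (* both parities reduce to the even partial sums, whose error is z^(2k+1) / (1 - z^2) *)
  assert (Heven : forall k, (Cmod (psum a_ext (2 * k) z - f_ext z)
                             <= Cmod z ^ (2 * k + 1) / (1 - Cmod z ^ 2))%R).
  { intros k. destruct (psum_a_ext_even z k) as [H1 _].
    replace (psum a_ext (2 * k) z - f_ext z) with (- (z ^ (2 * k + 1)) / (1 - z * z)).
    - unfold Cdiv. rewrite Cmod_mult, Cmod_opp, Cmod_inv, Cmod_pow by exact Hnz.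
      apply Rmult_le_compat_l; [apply pow_le; lra|].
      apply Rinv_le_contravar; [lra | apply Cmod_one_minus_sq_ge].
    - unfold f_ext.
      replace (psum a_ext (2 * k) z) with ((z - z ^ (2 * k + 1)) / (1 - z * z))
        by (rewrite <- H1; field; exact Hnz).
      field. exact Hnz. }
  assert (Hpow : forall m, (Cmod z ^ S m <= Cmod z ^ m)%R).
  { intros m. simpl. pose proof (pow_le (Cmod z) m Hz0). nra. }
  assert (Hinv : (0 <= / (1 - Cmod z ^ 2))%R) by (apply Rlt_le, Rinv_0_lt_compat; lra).
  destruct (Nat.Even_or_Odd n) as [[k ->]|[k ->]].
  - eapply Rle_trans; [apply Heven|]. apply Rmult_le_compat_r; [exact Hinv|].
    rewrite Nat.add_1_r. apply Hpow.
  - destruct (psum_a_ext_even z k) as [_ ->]. eapply Rle_trans; [apply Heven | lra].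
Qed.

Lemma is_series_a_ext (z : C) : in_disk z ->
  @is_series C_AbsRing C_NormedModule (fun n => a_ext n * z ^ n) (f_ext z).
Proof.
  intros Hz. unfold in_disk in Hz.
  pose proof (Cmod_ge_0 z) as Hz0.
  assert (Hd : (0 < 1 - Cmod z ^ 2)%R) by (simpl; nra).
  apply filterlim_locally. intros eps.
  destruct (pow_lt_1_zero (Cmod z) ltac:(rewrite Rabs_pos_eq; lra) (eps * (1 - Cmod z ^ 2))
              ltac:(apply Rmult_lt_0_compat; [apply cond_pos | exact Hd])) as [N1 HN1].
  exists N1. intros N HN. apply C_ball_of_Cmod.
  rewrite sum_n_csum. eapply Rle_lt_trans; [apply (Cmod_psum_a_ext_sub_le z (S N) Hz)|].
  specialize (HN1 (S N) ltac:(lia)). rewrite Rabs_pos_eq in HN1 by (apply pow_le; lra).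
  apply (Rmult_lt_reg_r (1 - Cmod z ^ 2)); [exact Hd|].
  unfold Rdiv. rewrite Rmult_assoc, Rinv_l by lra. lra.
Qed.

Lemma is_derive_of_quadratic_bound (f : C -> C) x l (dlt K : R) : (0 < dlt)%R -> (0 <= K)%R ->
  (forall y, (Cmod (y - x) < dlt)%R ->
             (Cmod (f y - f x - (y - x) * l) <= K * Cmod (y - x) ^ 2)%R) ->
  @is_derive C_AbsRing C_NormedModule f x l.
Proof.
  intros Hd HK H. split; [apply (is_linear_scal_l (K := C_AbsRing) (V := C_NormedModule))|].
  intros x' Hx'.
  apply (is_filter_lim_locally_unique (K := C_AbsRing) (V := AbsRing_NormedModule C_AbsRing))
    in Hx'. subst x'.
  intros eps.
  assert (Hr : (0 < Rmin dlt (eps / (K + 1)))%R).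
  { apply Rmin_case; [exact Hd | apply Rdiv_lt_0_compat; [apply cond_pos | lra]]. }
  exists (mkposreal _ Hr). intros y Hy.
  change (Cmod (y - x) < Rmin dlt (eps / (K + 1)))%R in Hy.
  change (Cmod (f y - f x - (y - x) * l) <= eps * Cmod (y - x))%R.
  pose proof (Rmin_l dlt (eps / (K + 1))). pose proof (Rmin_r dlt (eps / (K + 1))).
  eapply Rle_trans; [apply H; lra|].
  pose proof (Cmod_ge_0 (y - x)). pose proof (cond_pos eps).
  assert (K * Cmod (y - x) <= eps)%R.
  { apply Rle_trans with (K * (eps / (K + 1)))%R; [apply Rmult_le_compat_l; lra|].
    apply (Rmult_le_reg_r (K + 1)); [lra|].
    replace (K * (eps / (K + 1)) * (K + 1))%R with (K * eps)%R by (field; lra). nra. }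
  simpl. nra.
Qed.

Lemma is_derive_Cinv (x : C) : x <> 0 ->
  @is_derive C_AbsRing C_NormedModule (fun y => / y) x (- / (x * x)).
Proof.
  intros Hx.
  assert (Hm : (0 < Cmod x)%R) by (apply Cmod_gt_0; exact Hx).
  apply (is_derive_of_quadratic_bound _ x _ (Cmod x / 2) (2 / Cmod x ^ 3)); [lra | |].
  { apply Rlt_le, Rdiv_lt_0_compat; [lra | apply pow_lt; lra]. }
  intros y Hy.
  assert (Hy2 : (Cmod x / 2 <= Cmod y)%R).
  { pose proof (Cmod_triangle (x - y) y) as H. replace (x - y + y) with x in H by ring.
    rewrite <- Cmod_opp in Hy. replace (- (y - x)) with (x - y) in Hy by ring. lra. }
  assert (Hy0 : y <> 0) by (intro E; rewrite E, Cmod_0 in Hy2; lra).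
  replace (/ y - / x - (y - x) * - / (x * x)) with ((y - x) * (y - x) * / (x * x * y))
    by (field; auto).
  rewrite !Cmod_mult, Cmod_inv by (repeat apply Cmult_neq_0; auto).
  rewrite !Cmod_mult.
  apply (Rmult_le_reg_r (Cmod x * Cmod x * Cmod y)); [apply Rmult_lt_0_compat; nra|].
  replace (Cmod (y - x) * Cmod (y - x) * / (Cmod x * Cmod x * Cmod y) * (Cmod x * Cmod x * Cmod y))%R
    with (Cmod (y - x) * Cmod (y - x))%R by (field; lra).
  replace (2 / Cmod x ^ 3 * Cmod (y - x) ^ 2 * (Cmod x * Cmod x * Cmod y))%R
    with ((Cmod (y - x) * Cmod (y - x)) * (2 * Cmod y / Cmod x))%R by (simpl; field; lra).
  pose proof (Cmod_ge_0 (y - x)).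
  assert (1 <= 2 * Cmod y / Cmod x)%R.
  { apply (Rmult_le_reg_r (Cmod x)); [exact Hm|].
    replace (2 * Cmod y / Cmod x * Cmod x)%R with (2 * Cmod y)%R by (field; lra). lra. }
  nra.
Qed.

Definition f_ext' (z : C) : C := (1 + z * z) / ((1 - z * z) * (1 - z * z)).

Lemma is_derive_f_ext (z : C) : in_disk z ->
  @is_derive C_AbsRing C_NormedModule f_ext z (f_ext' z).
Proof.
  intros Hz. unfold in_disk in Hz.
  assert (Hnz : 1 - z * z <> 0) by (apply one_minus_sq_neq0; exact Hz).
  apply is_derive_C_of_AbsRing.
  assert (Hg : @is_derive C_AbsRing (AbsRing_NormedModule C_AbsRing) (fun w : C => 1 - w * w) z
                 (- (2 * z))).
  { eapply is_derive_eq.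
    - apply (is_derive_minus (K := C_AbsRing) (V := AbsRing_NormedModule C_AbsRing)
               (fun _ => one) (fun w => mult w w));
        [apply (is_derive_const (K := C_AbsRing)) |].
      apply (is_derive_mult (K := C_AbsRing));
        [apply (is_derive_id (K := C_AbsRing)) | apply (is_derive_id (K := C_AbsRing)) |].
      intros; apply Cmult_comm.
    - change (0 - (1 * z + z * 1) = - (2 * z)). ring. }
  assert (Hi : @is_derive C_AbsRing (AbsRing_NormedModule C_AbsRing) (fun w : C => / (1 - w * w)) z
                 ((- (2 * z)) * (- / ((1 - z * z) * (1 - z * z))))).
  { apply (is_derive_comp (K := C_AbsRing) (V := AbsRing_NormedModule C_AbsRing)
             (fun y => / y) (fun w => 1 - w * w)); [|exact Hg].
    apply is_derive_AbsRing_of_C, is_derive_Cinv. exact Hnz. }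
  eapply is_derive_eq.
  - apply (is_derive_mult (K := C_AbsRing) (fun w => w) (fun w => / (1 - w * w)));
      [apply (is_derive_id (K := C_AbsRing)) | exact Hi | intros; apply Cmult_comm].
  - change (1 * / (1 - z * z) + z * ((- (2 * z)) * (- / ((1 - z * z) * (1 - z * z))))
            = f_ext' z).
    unfold f_ext'. field. exact Hnz.
Qed.

Lemma Re_one_plus_div_one_minus_pos (w : C) : (Cmod w < 1)%R -> (0 < Re ((1 + w) / (1 - w)))%R.
Proof.
  intros Hw.
  assert (Hw2 : (Re w ^ 2 + Im w ^ 2 < 1)%R).
  { rewrite <- Cmod2_alt. pose proof (Cmod_ge_0 w). nra. }
  destruct w as [p q]. simpl in Hw2.
  assert (Hden : (0 < (1 - p) * (1 - p) + q * q)%R) by nra.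
  replace (Re ((1 + (p, q)) / (1 - (p, q))))
    with ((1 - p * p - q * q) / ((1 - p) * (1 - p) + q * q))%R by (simpl; field; lra).
  apply Rdiv_lt_0_compat; nra.
Qed.

Lemma f_ext_in_F2 : class_F2 f_ext f_ext' a_ext.
Proof.
  split; [|split].
  - split; [reflexivity|]. split; [reflexivity|]. exact is_series_a_ext.
  - intros z Hz. apply is_derive_f_ext. exact Hz.
  - intros z Hz. unfold in_disk in Hz.
    replace ((1 - z * z) * f_ext' z) with ((1 + z * z) / (1 - z * z))
      by (unfold f_ext'; field; apply one_minus_sq_neq0; exact Hz).
    apply Re_one_plus_div_one_minus_pos.
    rewrite Cmod_mult. pose proof (Cmod_ge_0 z). nra.
Qed.

Lemma H21_a_ext : H21 a_ext = RtoC (- / 4).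
Proof.
  unfold H21, gamma1, gamma2, gamma3, a_ext. simpl.
  apply injective_projections; simpl; field.
Qed.

Theorem theorem2p2 :
  (forall (f f' : C -> C) (a : nat -> C),
      class_F2 f f' a -> (Cmod (H21 a) <= / 4)%R) /\
  ((exists f' : C -> C, class_F2 f_ext f' a_ext) /\ Cmod (H21 a_ext) = (/ 4)%R).
Proof.
  split; [exact Cmod_H21_le|].
  split; [exists f_ext'; exact f_ext_in_F2|].
  rewrite H21_a_ext, Cmod_R, Rabs_left by lra.
  field.
Qed.
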